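(* Let $\mathbb{X}$ and $\mathbb{Y}$ be absolutely matrix ordered spaces and $\varphi:\mathbb{X}\to \mathbb{Y}$ a completely absolute value preserving map. Put $Ker(\varphi)=\lbrace x\in \mathbb{X}:\varphi(x)=0\rbrace.$ Then: (1) $\mathbb{M}_{l,m}(Ker(\varphi))=Ker(\varphi_{l,m})$ for every $l,m\in \mathbb{N}.$ (2) $Ker(\varphi_l)$ is self-adjoint for every $l\in \mathbb{N}.$ (3) $Ker(\varphi)$ is an absolute matrix order ideal of $\mathbb{X}.$ (4) $\varphi=0$ if and only if $Ker(\varphi)=\mathbb{X}$ if and only if $Ker(\varphi)^+=\mathbb{X}^+.$ Moreover, if $\mathbb{X}$ is an absolute matrix order unit space with order unit $e$, then (5) $\varphi=0$ if and only if $\varphi(e)=0.$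
   Context: An absolutely matrix ordered space is a matrix ordered space $(\mathbb{X},\{\mathbb{M}_m(\mathbb{X})^+\})$ with maps $\vert\cdot\vert_{l,m}:\mathbb{M}_{l,m}(\mathbb{X})\to\mathbb{M}_m(\mathbb{X})^+$ such that each $(\mathbb{M}_m(\mathbb{X})_{sa},\mathbb{M}_m(\mathbb{X})^+,\vert\cdot\vert_m)$ is an absolutely ordered space, $\vert\varsigma_1x\varsigma_2\vert\le\Vert\varsigma_1\Vert\,\vert\vert x\vert\varsigma_2\vert$ for scalar matrices $\varsigma_1,\varsigma_2$, and $\vert x\circledast y\vert=\vert x\vert\circledast\vert y\vert$. $\varphi_{l,m}:\mathbb{M}_{l,m}(\mathbb{X})\to\mathbb{M}_{l,m}(\mathbb{Y})$ denotes the entrywise amplification $[x_{i,j}]\mapsto[\varphi(x_{i,j})]$, $\varphi_l=\varphi_{l,l}$; $\varphi$ is completely absolute value preserving if it is linear and $\varphi_l(\vert x\vert_l)=\vert\varphi_l(x)\vert_l$ for all $x\in\mathbb{M}_l(\mathbb{X})$ and all $l$ (this implies $\varphi_l(x^* )=\varphi_l(x)^*$). A subspace $\mathbb{Z}\subseteq\mathbb{X}$ is an absolute matrix order ideal if, with $\mathbb{M}_l(\mathbb{Z})^+=\mathbb{M}_l(\mathbb{X})^+\cap\mathbb{M}_l(\mathbb{Z})$, each $\mathbb{M}_l(\mathbb{Z})_{sa}$ is an order ideal of $\mathbb{M}_l(\mathbb{X})_{sa}$ and $\vert\cdot\vert_{l,m}$ maps $\mathbb{M}_{l,m}(\mathbb{Z})$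 into $\mathbb{M}_m(\mathbb{Z})^+$. $Ker(\varphi)^+=Ker(\varphi)\cap\mathbb{X}^+$. *)

From mathcomp Require Import all_boot all_algebra.
From mathcomp Require Import all_classical all_reals.
From mathcomp Require Import complex.
Set Implicit Arguments. Unset Strict Implicit. Unset Printing Implicit Defensive.
Import GRing.Theory Num.Theory.
Local Open Scope ring_scope.
Local Open Scope complex_scope.
Local Open Scope classical_set_scope.

Section Defs.
Variable R : realType.
Local Notation C := R[i].

Definition cvnorm l (v : 'cV[C]_l) : R := Num.sqrt (\sum_i complex.Re (`|v i 0| ^+ 2)).

Definition opnorm n l (a : 'M[C]_(n, l)) : R :=
  sup [set r : R | exists v : 'cV[C]_l, cvnorm v <= 1 /\ r = cvnorm (a *m v)].

Definition ctr n l (a : 'M[C]_(n, l)) : 'M[C]_(l, n) := (map_mx (fun z => z^*) a)^T.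

Variable X : lmodType C.

Definition mscale l m (c : C) (x : 'M[X]_(l, m)) : 'M[X]_(l, m) := map_mx ( *:%R c) x.

Definition smx n l m r (a : 'M[C]_(n, l)) (x : 'M[X]_(l, m)) (b : 'M[C]_(m, r))
  : 'M[X]_(n, r) :=
  \matrix_(i, j) \sum_(k < l) \sum_(p < m) (a i k * b p j) *: x k p.

Definition dsum l m n r (x : 'M[X]_(l, m)) (y : 'M[X]_(n, r)) : 'M[X]_(l + n, m + r) :=
  block_mx x 0 0 y.

Definition mstar (s : X -> X) l m (x : 'M[X]_(l, m)) : 'M[X]_(m, l) :=
  \matrix_(i, j) s (x j i).

Definition selfadj (s : X -> X) m (v : 'M[X]_m) := mstar s v = v.

Definition diagn (e : X) n : 'M[X]_n := \matrix_(i, j) if i == j then e else 0.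

Definition Mset (Z : set X) l m : set 'M[X]_(l, m) := [set x | forall i j, Z (x i j)].

Definition is_star (s : X -> X) :=
  involutive s /\ forall (a : C) (x y : X), s (a *: x + y) = a^* *: s x + s y.

Record is_mos (s : X -> X) (P : forall m, 'M[X]_m -> Prop) : Prop := {
  mos_star : is_star s;
  mos_sa : forall m (v : 'M[X]_m), P m v -> selfadj s v;
  mos_add : forall m (u v : 'M[X]_m), P m u -> P m v -> P m (u + v);
  mos_scale : forall m (k : R) (v : 'M[X]_m), 0 <= k -> P m v -> P m (mscale k%:C v);
  mos_proper : forall m (v : 'M[X]_m), P m v -> P m (- v) -> v = 0;
  mos_conj : forall m n (a : 'M[C]_(m, n)) (v : 'M[X]_m), P m v -> P n (smx (ctr a) v a)
}.

(* (V, V^+, |.|) is an absolutely ordered space, where V = M_m(X)_sa (a real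
   ordered vector space), V^+ = P, |.| = A restricted to V;  u <= v  iff  P (v - u). *)
Record is_aos (s : X -> X) m (P : 'M[X]_m -> Prop) (A : 'M[X]_m -> 'M[X]_m) : Prop := {
  aos_a : forall v, P v -> A v = v;
  aos_b : forall v, selfadj s v -> P (A v + v) /\ P (A v - v);
  aos_c : forall (k : R) v, selfadj s v -> A (mscale k%:C v) = mscale `|k|%:C (A v);
  aos_d : forall u v w, selfadj s u -> selfadj s v -> selfadj s w ->
          A (u - v) = u + v -> P w -> P (v - w) -> A (u - w) = u + w;
  aos_e : forall u v w, selfadj s u -> selfadj s v -> selfadj s w ->
          A (u - v) = u + v -> A (u - w) = u + w ->
          A (u - A (v + w)) = u + A (v + w) /\ A (u - A (v - w)) = u + A (v - w)
}.

Record is_amos (s : X -> X) (P : forall m, 'M[X]_m -> Prop)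
    (A : forall l m, 'M[X]_(l, m) -> 'M[X]_m) : Prop := {
  amos_mos : is_mos s P;
  amos_pos : forall l m (x : 'M[X]_(l, m)), P m (A l m x);
  amos_aos : forall m, is_aos s (P m) (A m m);
  amos_mul : forall n l m r (a : 'M[C]_(n, l)) (x : 'M[X]_(l, m)) (b : 'M[C]_(m, r)),
    P r (mscale (opnorm a)%:C (A m r (smx 1%:M (A l m x) b)) - A n r (smx a x b));
  amos_dsum : forall l m n r (x : 'M[X]_(l, m)) (y : 'M[X]_(n, r)),
    A (l + n) (m + r) (dsum x y) = dsum (A l m x) (A n r y)
}.

Definition is_amous (s : X -> X) (P : forall m, 'M[X]_m -> Prop)
    (A : forall l m, 'M[X]_(l, m) -> 'M[X]_m) (e : X) : Prop :=
  is_amos s P A /\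
  forall n,
    (forall v : 'M[X]_n, selfadj s v ->
       exists k : R, 0 < k /\ P n (mscale k%:C (diagn e n) - v)) /\
    (forall v : 'M[X]_n, selfadj s v ->
       (forall k : R, 0 < k -> P n (v + mscale k%:C (diagn e n))) -> P n v).

Definition is_subspace (Z : set X) :=
  Z 0 /\ forall (a : C) (x y : X), Z x -> Z y -> Z (a *: x + y).

Definition is_amoi (s : X -> X) (P : forall m, 'M[X]_m -> Prop)
    (A : forall l m, 'M[X]_(l, m) -> 'M[X]_m) (Z : set X) : Prop :=
  is_subspace Z /\
  (forall l (u v : 'M[X]_l), Mset Z v -> selfadj s v ->
       P l u -> P l (v - u) -> Mset Z u /\ selfadj s u) /\
  (forall l m (x : 'M[X]_(l, m)), Mset Z x -> Mset Z (A l m x) /\ P m (A l m x)).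

Definition Xplus (P : forall m, 'M[X]_m -> Prop) : set X := [set x | P 1%N (const_mx x)].

End Defs.
Arguments Mset {R X} Z l m _.

Section Maps.
Variable R : realType.
Local Notation C := R[i].
Variables X Y : lmodType C.

Definition is_cavp (AX : forall l m, 'M[X]_(l, m) -> 'M[X]_m)
    (AY : forall l m, 'M[Y]_(l, m) -> 'M[Y]_m) (phi : X -> Y) : Prop :=
  (forall (a : C) (x y : X), phi (a *: x + y) = a *: phi x + phi y) /\
  forall l (x : 'M[X]_l), map_mx phi (AX l l x) = AY l l (map_mx phi x).

Definition Kernel (T : Type) (U : zmodType) (f : T -> U) : set T := [set x | f x = 0].

End Maps.

From HB Require Import structures.
From mathcomp Require Import all_boot all_algebra.
From mathcomp Require Import all_classical all_reals.
From mathcomp Require Import complex.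
Set Implicit Arguments. Unset Strict Implicit. Unset Printing Implicit Defensive.
Import GRing.Theory Num.Theory.
Local Open Scope ring_scope.
Local Open Scope classical_set_scope.

(* A completely absolute value preserving map is positive, since [phi u = phi |u| = |phi u|]
   for [u >= 0]; as the cones are proper, its kernel is an order ideal, and it is closed
   under [|.|] (for rectangular [x], pass to the square matrix [x ⊛ 0]).  Twice a self-adjoint
   [v] is the difference [(|v| + v) - (|v| - v)] of positives, so [phi] preserves
   self-adjointness; with the Cartesian decomposition [x = Re x + 'i Im x] this makes the
   kernel *-closed and shows that a linear map vanishing on [X^+] vanishes.  If [e] is an
   order unit, every positive [v] lies below some [k e], hence in the kernel once [phi e = 0]. *)

Lemma Mset_Kernel (R : realType) (X : lmodType R[i]) (U : zmodType) (f : X -> U) l m :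
  Mset (Kernel f) l m = Kernel (@map_mx _ _ f l m).
Proof.
apply/seteqP; split=> x /= hx; first by apply/matrixP=> i j; rewrite !mxE hx.
by move=> i j; have /matrixP/(_ i j) := hx; rewrite !mxE.
Qed.

Lemma Kernel_eq_setT (T : Type) (U : zmodType) (f : T -> U) :
  Kernel f = [set: T] <-> f = fun=> 0.
Proof.
split=> [kerT|->]; last by apply/seteqP; split.
by apply/funext=> x; have : Kernel f x by rewrite kerT.
Qed.

Lemma addvv_eq0 (F : numFieldType) (V : lmodType F) (v : V) : v + v = 0 -> v = 0.
Proof.
rewrite -mulr2n -scaler_nat => /eqP; rewrite scaler_eq0 pnatr_eq0 /=.
by move/eqP.
Qed.

Lemma selfadj_const_mx1 (R : realType) (X : lmodType R[i]) (s : X -> X) v :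
  selfadj s (const_mx v : 'M[X]_1) <-> s v = v.
Proof.
split=> [/matrixP/(_ ord0 ord0) | sv]; first by rewrite !mxE.
by apply/matrixP=> i j; rewrite !mxE sv.
Qed.

Section Star.
Variables (R : realType) (X : lmodType R[i]) (s : X -> X).
Hypothesis s_star : is_star s.

Lemma starK : involutive s. Proof. by case: s_star. Qed.

Lemma star_is_zmod_morphism : zmod_morphism s.
Proof.
have starD x y : s (x + y) = s x + s y.
  by have := s_star.2 1 x y; rewrite conjC1 !scale1r.
have star0 : s 0 = 0 by apply: (addrI (s 0)); rewrite -starD !addr0.
by move=> x y; rewrite starD; congr (_ + _); apply/eqP; rewrite -addr_eq0 -starD addNr star0.
Qed.

HB.instance Definition _ := GRing.isZmodMorphism.Build X X s star_is_zmod_morphism.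

Lemma starN x : s (- x) = - s x. Proof. exact: raddfN. Qed.

Lemma starZ a x : s (a *: x) = a^* *: s x.
Proof. by rewrite -[a *: x]addr0 s_star.2 raddf0 addr0. Qed.

Lemma star_fixedB x y : s x = x -> s y = y -> s (x - y) = x - y.
Proof. by move=> sx sy; rewrite raddfB /= sx sy. Qed.

Lemma star_fixed_half x : s (x + x) = x + x -> s x = x.
Proof.
move=> sxx; apply/eqP; rewrite -subr_eq0; apply/eqP/addvv_eq0.
by rewrite addrACA -opprD -(raddfD s) /= sxx subrr.
Qed.

Lemma star_re_fixed x : s (x + s x) = x + s x.
Proof. by rewrite raddfD /= starK addrC. Qed.

Lemma star_im_fixed x : s ('i *: (x - s x)) = 'i *: (x - s x).
Proof. by rewrite starZ raddfB /= starK conjCi scaleNr -scalerN opprB. Qed.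

Lemma star_fixed_iscale_eq0 w : s w = w -> s ('i *: w) = 'i *: w -> w = 0.
Proof.
move=> sw; rewrite starZ sw conjCi scaleNr => /eqP; rewrite eq_sym -subr_eq0 opprK.
by move/eqP/addvv_eq0/eqP; rewrite scaler_eq0 (negPf (neq0Ci _)) => /eqP.
Qed.

(* Every [x] is [(x + s x) - 'i *: ('i *: (x - s x))] up to the factor 2. *)
Lemma linear_eq0_on_fixed (Y : lmodType R[i]) (f : {linear X -> Y}) :
  (forall v, s v = v -> f v = 0) -> forall x, f x = 0.
Proof.
move=> f0 x; have /eqP := f0 _ (star_im_fixed x).
rewrite linearZ scaler_eq0 (negPf (neq0Ci _)) raddfB subr_eq0 /= => /eqP fxs.
by apply: addvv_eq0; rewrite [in t in _ + t]fxs -raddfD; apply: f0; exact: star_re_fixed.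
Qed.

End Star.

Section AbsolutelyMatrixOrdered.
Variables (R : realType) (X : lmodType R[i]) (s : X -> X).
Variables (P : forall m, 'M[X]_m -> Prop) (A : forall l m, 'M[X]_(l, m) -> 'M[X]_m).
Arguments P : clear implicits.
Arguments A : clear implicits.
Hypothesis hX : is_amos s P A.

Lemma amos_abs0 n : A n n 0 = 0.
Proof.
apply: (aos_a (amos_aos hX n)).
have := mos_scale (amos_mos hX) (ler0n R 0) (amos_pos hX (0 : 'M[X]_(n, n))).
suff -> : mscale (0 : R)%:C%C (A n n 0) = 0 by [].
by apply/matrixP=> i j; rewrite !mxE scale0r.
Qed.

Lemma Xplus_selfadj v : Xplus P v -> s v = v.
Proof. by move/(mos_sa (amos_mos hX))/selfadj_const_mx1. Qed.

Lemma selfadj_double_Xplus_diff v : s v = v ->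
  exists p q, [/\ Xplus P p, Xplus P q & v + v = p - q].
Proof.
move/selfadj_const_mx1 => sav; have [Pp Pm] := aos_b (amos_aos hX 1) sav.
have mx1E (M : 'M[X]_1) : M = const_mx (M ord0 ord0).
  by apply/matrixP=> i j; rewrite !ord1 mxE.
set a := A 1 1 (const_mx v) ord0 ord0.
exists (a + v), (a - v); split.
- by move: Pp; rewrite [t in P _ t -> _]mx1E !mxE.
- by move: Pm; rewrite [t in P _ t -> _]mx1E !mxE.
- by rewrite opprB [RHS]addrC addrA subrK.
Qed.

Lemma linear_eq0_on_Xplus (Y : lmodType R[i]) (f : {linear X -> Y}) :
  (forall v, Xplus P v -> f v = 0) -> forall x, f x = 0.
Proof.
move=> fP; apply: (linear_eq0_on_fixed (mos_star (amos_mos hX))) => v.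
case/selfadj_double_Xplus_diff => p [q [Pp Pq vv]].
by apply: addvv_eq0; rewrite -raddfD /= vv raddfB /= !fP // subrr.
Qed.

End AbsolutelyMatrixOrdered.

Section CompletelyAbsoluteValuePreserving.
Variables (R : realType) (X Y : lmodType R[i]).
Variables (sX : X -> X) (PX : forall m, 'M[X]_m -> Prop).
Variable AX : forall l m, 'M[X]_(l, m) -> 'M[X]_m.
Variables (sY : Y -> Y) (PY : forall m, 'M[Y]_m -> Prop).
Variable AY : forall l m, 'M[Y]_(l, m) -> 'M[Y]_m.
Arguments PX : clear implicits.
Arguments AX : clear implicits.
Arguments PY : clear implicits.
Arguments AY : clear implicits.
Hypotheses (hX : is_amos sX PX AX) (hY : is_amos sY PY AY).
Variable phi : X -> Y.
Hypothesis phi_linear : linear phi.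
Hypothesis phi_abs : forall l (x : 'M[X]_l), map_mx phi (AX l l x) = AY l l (map_mx phi x).

HB.instance Definition _ := GRing.isLinear.Build _ _ _ _ phi phi_linear.

Let sX_star := mos_star (amos_mos hX).
Let sY_star := mos_star (amos_mos hY).

Lemma cavp_pos l (u : 'M[X]_l) : PX l u -> PY l (map_mx phi u).
Proof. by move=> Pu; rewrite -(aos_a (amos_aos hX l) Pu) phi_abs; apply: (amos_pos hY). Qed.

Lemma cavp_ker_order_ideal l (u v : 'M[X]_l) :
  PX l u -> PX l (v - u) -> map_mx phi v = 0 -> map_mx phi u = 0.
Proof.
move=> Pu Pvu phiv; apply: (mos_proper (amos_mos hY) (cavp_pos Pu)).
by have := cavp_pos Pvu; rewrite map_mxB phiv sub0r.
Qed.

Lemma cavp_ker_abs l m (x : 'M[X]_(l, m)) :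
  map_mx phi x = 0 -> map_mx phi (AX l m x) = 0.
Proof.
have abs_sq p q (y : 'M[X]_(p, q)) :
    p = q -> map_mx phi y = 0 -> map_mx phi (AX p q y) = 0.
  by move=> epq; subst q => phiy; rewrite phi_abs phiy (amos_abs0 hY).
move=> phix; have := abs_sq _ _ (dsum x (0 : 'M[X]_(m, l))) (addnC l m).
rewrite /dsum map_block_mx phix !map_mx0 block_mx0 (amos_dsum hX) /dsum map_block_mx.
move=> /(_ erefl) /(congr1 ulsubmx); rewrite block_mxKul => ->.
by apply/matrixP=> i j; rewrite !mxE.
Qed.

Lemma cavp_selfadj v : sX v = v -> sY (phi v) = phi v.
Proof.
case/(selfadj_double_Xplus_diff hX) => p [q [Pp Pq vv]].
have phi_fixed w : Xplus PX w -> sY (phi w) = phi w.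
  by move=> Pw; apply: (Xplus_selfadj hY); have := cavp_pos Pw; rewrite map_const_mx.
apply: (star_fixed_half sY_star); rewrite -raddfD /= vv raddfB /=.
by apply: star_fixedB => //; apply: phi_fixed.
Qed.

Lemma cavp_ker_star x : phi x = 0 -> phi (sX x) = 0.
Proof.
move=> phix; apply: (star_fixed_iscale_eq0 sY_star).
  by have := cavp_selfadj (star_re_fixed sX_star x); rewrite raddfD /= phix add0r.
have := cavp_selfadj (star_im_fixed sX_star x).
by rewrite linearZ raddfB /= phix sub0r scalerN starN // => /oppr_inj.
Qed.

Lemma cavp_ker_mstar l m (x : 'M[X]_(l, m)) :
  map_mx phi x = 0 -> map_mx phi (mstar sX x) = 0.
Proof.
move=> /matrixP phix; apply/matrixP=> i j; rewrite !mxE; apply: cavp_ker_star.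
by have := phix j i; rewrite !mxE.
Qed.

Lemma Kernel_setT_iff_Xplus : Kernel phi = [set: X] <-> Kernel phi `&` Xplus PX = Xplus PX.
Proof.
rewrite setIidPr; split=> [-> // | XK].
by apply/Kernel_eq_setT/funext; apply: (linear_eq0_on_Xplus hX (f := phi)).
Qed.

Lemma cavp_eq0_order_unit e : is_amous sX PX AX e -> phi = (fun=> 0) <-> phi e = 0.
Proof.
move=> [_ arch]; split=> [-> // | phie].
apply/funext; apply: (linear_eq0_on_Xplus hX (f := phi)) => v Pv.
have [k [_ Pke]] := (arch 1%N).1 _ (mos_sa (amos_mos hX) Pv).
have phike : map_mx phi (mscale k%:C%C (diagn e 1)) = 0.
  apply/matrixP=> i j; rewrite !mxE linearZ /=.
  by case: eqP => _; rewrite ?phie ?(raddf0 phi) scaler0.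
have /matrixP/(_ ord0 ord0) := cavp_ker_order_ideal Pv Pke phike.
by rewrite !mxE.
Qed.

Lemma Kernel_is_amoi : is_amoi sX PX AX (Kernel phi).
Proof.
split; [split | split].
- exact: raddf0.
- by move=> a x y; rewrite /Kernel /= linearP /= => -> ->; rewrite scaler0 addr0.
- move=> l u v; rewrite !Mset_Kernel => phiv _ Pu Pvu.
  by split; [apply: cavp_ker_order_ideal Pvu phiv | apply: (mos_sa (amos_mos hX) Pu)].
- move=> l m x; rewrite !Mset_Kernel => phix.
  by split; [apply: cavp_ker_abs | apply: (amos_pos hX)].
Qed.

Lemma Kernel_mstar l :
  [set mstar sX x | x in Kernel (@map_mx _ _ phi l l)] = Kernel (@map_mx _ _ phi l l).
Proof.
apply/seteqP; split=> [_ [x phix <-] | x phix]; first exact: cavp_ker_mstar.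
exists (mstar sX x); first exact: cavp_ker_mstar.
by apply/matrixP=> i j; rewrite !mxE starK.
Qed.

End CompletelyAbsoluteValuePreserving.

Theorem theorem3p8 (R : realType) (X Y : lmodType R[i])
  (sX : X -> X) (PX : forall m, 'M[X]_m -> Prop) (AX : forall l m, 'M[X]_(l, m) -> 'M[X]_m)
  (sY : Y -> Y) (PY : forall m, 'M[Y]_m -> Prop) (AY : forall l m, 'M[Y]_(l, m) -> 'M[Y]_m)
  (hX : is_amos sX PX AX) (hY : is_amos sY PY AY)
  (phi : X -> Y) (hphi : is_cavp AX AY phi) :
  (* (1) *)
  (forall l m, Mset (Kernel phi) l m = Kernel (@map_mx _ _ phi l m)) /\
  (* (2) *)
  (forall l, [set mstar sX x | x in Kernel (@map_mx _ _ phi l l)]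
             = Kernel (@map_mx _ _ phi l l)) /\
  (* (3) *)
  is_amoi sX PX AX (Kernel phi) /\
  (* (4) *)
  ((phi = (fun=> 0)) <-> Kernel phi = [set: X]) /\
  (Kernel phi = [set: X] <-> Kernel phi `&` Xplus PX = Xplus PX) /\
  (* (5) *)
  (forall e : X, is_amous sX PX AX e -> (phi = (fun=> 0) <-> phi e = 0)).
Proof.
case: hphi => phi_linear phi_abs.
split; first exact: Mset_Kernel.
split; first exact: (Kernel_mstar hX hY phi_linear phi_abs).
split; first exact: (Kernel_is_amoi hX hY phi_linear phi_abs).
split; first exact: iff_sym (Kernel_eq_setT phi).
split; first exact: (Kernel_setT_iff_Xplus hX phi_linear).
exact: (cavp_eq0_order_unit hX hY phi_linear phi_abs).
Qed.
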